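(* Let $D$ be a 2-connected rooted digraph with root $r$. Then there exists a spanning subdigraph $A$ of $D$ which is acyclic, in which every vertex is reachable from $r$ by a directed path, and which contains at least half of the arcs of $D-r$ (the arcs of $D$ not incident to $r$).
   Context: A rooted digraph is a loopless digraph $D$ with a distinguished vertex $r$ (the root) such that: there is no arc $(u,r)$ for any $u\in V(D)$; there is no arc $(x,y)$ with $x\neq r$ and $y$ an outneighbour of $r$; and $r$ has outdegree at least 2. A cut of a rooted digraph $D$ is a set $S\subseteq V(D)\setminus\{r\}$ such that some vertex $z\notin S$ is not the endpoint of any directed path starting at $r$ in $D-S$. $D$ is 2-connected if it has no cut of size at most 1. *)

From mathcomp Require Import all_boot.
Set Implicit Arguments. Unset Strict Implicit. Unset Printing Implicit Defensive.

(* A digraph on a finite vertex type T is an arc relation E : rel T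
   (simple digraph: at most one arc (x,y) for each ordered pair). *)

Definition loopless (T : finType) (E : rel T) : Prop := forall x, ~~ E x x.

Definition rooted_digraph (T : finType) (E : rel T) (r : T) : Prop :=
  [/\ loopless E,
      (forall u, ~~ E u r),
      (forall x y, x != r -> E r y -> ~~ E x y)
    & 2 <= #|[set y | E r y]|].

Definition del_rel (T : finType) (E : rel T) (S : {set T}) : rel T :=
  [rel x y | [&& E x y, x \notin S & y \notin S]].

Definition is_cut (T : finType) (E : rel T) (r : T) (S : {set T}) : Prop :=
  r \notin S /\ exists z, z \notin S /\ ~~ connect (del_rel E S) r z.

Definition two_connected (T : finType) (E : rel T) (r : T) : Prop :=
  forall S : {set T}, #|S| <= 1 -> ~ is_cut E r S.

Definition subrel_of (T : finType) (F E : rel T) : Prop :=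
  forall x y, F x y -> E x y.

Definition acyclic (T : finType) (F : rel T) : Prop :=
  forall x y, F x y -> ~~ connect F y x.

Definition arcs_avoiding (T : finType) (F : rel T) (r : T) : {set T * T} :=
  [set p : T * T | [&& F p.1 p.2, p.1 != r & p.2 != r]].

From mathcomp Require Import all_boot zify.
Set Implicit Arguments. Unset Strict Implicit. Unset Printing Implicit Defensive.

(* Peel the non-root vertices off one at a time.  From the current set S we
   remove an entry vertex x (one with an in-neighbour outside S) whose shadow
   is empty, i.e. every other vertex of S stays reachable from r inside
   r + (S - x).  Such an x exists: the invariant [bypassable S], which for
   S = V - r is exactly 2-connectivity and survives every removal, shows that a
   nonempty shadow of an entry vertex contains an entry vertex with a strictly
   smaller shadow.  Numbering vertices by the reverse removal order gives a
   bipolar ordering: each vertex has an in-neighbour that is r or earlier and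
   one that is r or later.  The forward arcs and the backward arcs then both
   form acyclic subdigraphs in which r reaches everything, and together they
   cover D - r, so one of them keeps half of its arcs. *)

Section Paths.
Variable T : finType.
Implicit Types (e E : rel T) (W : {set T}).

Definition induced E W : rel T := [rel u v | [&& E u v, u \in W & v \in W]].

Lemma connect_ind e a (P : T -> Prop) :
  P a -> (forall u w, connect e a u -> P u -> e u w -> P w) ->
  forall v, connect e a v -> P v.
Proof.
move=> Pa step v /connectP [s pth ->].
suff: forall b, connect e a b -> P b -> path e b s -> P (last b s) by apply.
elim: s {pth} => [|z s IH] b ab Pb //= /andP [ebz pz].
by apply: IH pz; [apply: connect_trans ab (connect1 ebz) | apply: step ebz].
Qed.

Lemma connect_induced_sub E W1 W2 a b : W1 \subset W2 ->
  connect (induced E W1) a b -> connect (induced E W2) a b.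
Proof.
move=> /subsetP sW; apply: connect_sub => u w /and3P [Euw uW wW].
by apply: connect1; apply/and3P; split; rewrite ?sW.
Qed.

Lemma connect_induced_mem E W a v :
  connect (induced E W) a v -> (v == a) || (v \in W).
Proof.
move: v; apply: connect_ind; first by rewrite eqxx.
by move=> u w _ _ /and3P [_ _ ->]; rewrite orbT.
Qed.

Lemma connect_induced_D1 E W x a v : connect (induced E W) a v ->
  connect (induced E (W :\ x)) a v \/
  connect (induced E W) a x /\ connect (induced E W) x v.
Proof.
move: v; apply: connect_ind; first by left.
move=> u w au [avoid|[ax xu]] euw; last first.
  by right; split=> //; apply: connect_trans xu (connect1 euw).
have [wx|wx] := eqVneq w x.
  by right; split; [rewrite -wx; apply: connect_trans au (connect1 euw) | rewrite wx].
have [ux|ux] := eqVneq u x.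
  by right; split; [rewrite -ux | rewrite -ux; apply: connect1].
left; apply: connect_trans avoid (connect1 _).
by case/and3P: euw => Euw uW wW; apply/and3P; rewrite !in_setD1 ux wx uW wW.
Qed.

Lemma connect_induced_avoid E W z a v : ~~ connect (induced E W) a z ->
  connect (induced E W) a v -> connect (induced E (W :\ z)) a v.
Proof. by move=> /negP naz /(connect_induced_D1 z) [//|[]]. Qed.

Lemma connect_induced_last E W x a : a != x -> connect (induced E W) a x ->
  exists p, [/\ p != x, connect (induced E (W :\ x)) a p & induced E W p x].
Proof.
move=> ax ax_path.
suff: forall v, connect (induced E W) a v ->
    v != x /\ connect (induced E (W :\ x)) a v \/
    exists p, [/\ p != x, connect (induced E (W :\ x)) a p & induced E W p x].
  by move/(_ x ax_path); rewrite eqxx => -[[]|].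
apply: connect_ind; first by left.
move=> u w _ [[ux au]|found] euw; last by right.
have [wx|wx] := eqVneq w x; first by right; exists u; split=> //; rewrite -wx.
left; split=> //; apply: connect_trans au (connect1 _).
by case/and3P: euw => Euw uW wW; apply/and3P; rewrite !in_setD1 ux wx uW wW.
Qed.

Lemma connect_cross e a v (Q : {set T}) : connect e a v -> a \notin Q -> v \in Q ->
  exists p z, [/\ e p z, p \notin Q & z \in Q].
Proof.
move=> av aQ; move: v av; apply: connect_ind => [aQ'|u w _ IH euw wQ].
  by rewrite aQ' in aQ.
by have [/IH|uQ] := boolP (u \in Q); last exists u, w.
Qed.

Definition rank_arcs E (h : T -> nat) : rel T := [rel u v | E u v && (h u < h v)].

Lemma acyclic_rank_arcs E h : acyclic (rank_arcs E h).
Proof.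
move=> x y /andP [_ hxy]; apply/negP => yx.
suff: h y <= h x by rewrite leqNgt hxy.
move: x yx {hxy}; apply: connect_ind => // u w _ hyu /andP [_ huw].
exact: leq_trans hyu (ltnW huw).
Qed.

Lemma connect_rank_arcs E h r :
  (forall v, v != r -> exists u, E u v && (h u < h v)) ->
  forall v, connect (rank_arcs E h) r v.
Proof.
move=> in_lower v; elim: {v}(h v).+1 {-2}v (ltnSn (h v)) => // n IH v hv.
have [->|vr] := eqVneq v r; first exact: connect0.
have [u /andP [Euv huv]] := in_lower v vr.
apply: connect_trans (IH u (leq_trans huv hv)) (connect1 _).
exact/andP.
Qed.

End Paths.

Lemma acyclic_spanning_of_ranks (T : finType) (E : rel T) (r : T)
    (h1 h2 : T -> nat) :
  (forall v, v != r -> exists u, E u v && (h1 u < h1 v)) ->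
  (forall v, v != r -> exists u, E u v && (h2 u < h2 v)) ->
  (forall u v, E u v -> u != r -> v != r -> (h1 u < h1 v) || (h2 u < h2 v)) ->
  exists A : rel T,
    [/\ subrel_of A E, acyclic A, (forall v, connect A r v)
      & #|arcs_avoiding E r| <= 2 * #|arcs_avoiding A r|].
Proof.
move=> low1 low2 cover.
have rank_ok h : (forall v, v != r -> exists u, E u v && (h u < h v)) ->
    [/\ subrel_of (rank_arcs E h) E, acyclic (rank_arcs E h)
      & forall v, connect (rank_arcs E h) r v].
  move=> low; split; first by move=> x y /andP [].
    exact: acyclic_rank_arcs.
  exact: connect_rank_arcs.
have split_arcs : arcs_avoiding E r \subset
    arcs_avoiding (rank_arcs E h1) r :|: arcs_avoiding (rank_arcs E h2) r.
  apply/subsetP => -[u v]; rewrite !inE /= => /and3P [Euv ur vr]; rewrite /rank_arcs /=.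
  by rewrite Euv ur vr !andbT /=; apply: cover.
have count := subset_leq_card split_arcs; rewrite cardsU in count.
have [cmp|cmp] :=
  leqP #|arcs_avoiding (rank_arcs E h2) r| #|arcs_avoiding (rank_arcs E h1) r|.
  by exists (rank_arcs E h1); have [? ? ?] := rank_ok h1 low1; split=> //; lia.
by exists (rank_arcs E h2); have [? ? ?] := rank_ok h2 low2; split=> //; lia.
Qed.

Lemma setU1D1_subset (T : finType) (a x z : T) (S : {set T}) :
  (a |: S :\ x) :\ z \subset a |: S :\ z.
Proof.
by apply/subsetP => y; rewrite !inE => /andP [-> /orP [-> | /andP [_ ->]]]; rewrite ?orbT.
Qed.

Lemma setU1D1 (T : finType) (a x : T) (S : {set T}) :
  a != x -> (a |: S) :\ x = a |: S :\ x.
Proof.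
move=> ax; apply/setP => y; rewrite !inE.
by case: eqP => // ->; rewrite eq_sym (negbTE ax).
Qed.

Section Ordering.
Variables (T : finType) (E : rel T) (r : T).
Implicit Types (S : {set T}) (f : T -> nat).

Definition reach_within S v := connect (induced E (r |: S)) r v.

Definition bypassable S := forall s v, s \in S -> v \in S -> v != s ->
  reach_within (S :\ s) v \/ exists2 b, b \notin S & connect (induced E [set~ s]) b v.

Definition entry S x := (x \in S) && [exists b, (b \notin S) && E b x].

Definition shadow S x := [set v in S | (v != x) && ~~ reach_within (S :\ x) v].

Definition bipolar_rank S f :=
  [/\ {in S, forall v, 0 < f v <= #|S|}, {in S &, injective f},
      {in S, forall v, exists u, E u v && ((u == r) || (u \in S) && (f u < f v))}
    & {in S, forall v, exists w, E w v && ((w \notin S) || (f v < f w))}].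

Lemma bypassable_D1 S x : r \notin S -> bypassable S -> bypassable (S :\ x).
Proof.
move=> rS bypS s v; rewrite !in_setD1 => /andP [sx sS] /andP [vx vS] vs.
have [rv|[b bS bv]] := bypS s v sS vS vs; last first.
  by right; exists b; rewrite // in_setD1 negb_and bS orbT.
have [rv'|[_ xv]] := connect_induced_D1 x rv.
  left; apply: connect_induced_sub rv'; apply/subsetP => y; rewrite !inE.
  by case/andP=> -> /orP [-> | /andP [-> ->]]; rewrite ?orbT.
right; exists x; first by rewrite !inE eqxx.
apply: connect_induced_sub xv; apply/subsetP => y; rewrite !inE.
by case/orP=> [/eqP -> | /andP []//]; apply: contraNneq rS => ->.
Qed.

Lemma reach_within_D1 S x : shadow S x = set0 ->
  {in S :\ x, forall v, reach_within (S :\ x) v}.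
Proof.
move=> sh0 v; rewrite in_setD1 => /andP [vx vS]; apply/negPn/negP => nv.
have: v \in shadow S x by rewrite inE vS vx nv.
by rewrite sh0 inE.
Qed.

Lemma bipolar_rank_extend S x f : x \in S -> (exists2 b, b \notin S & E b x) ->
  (exists q, E q x && ((q == r) || (q \in S :\ x))) -> bipolar_rank (S :\ x) f ->
  bipolar_rank S (fun y => if y == x then #|S| else f y).
Proof.
move=> xS [b bS Ebx] [q /andP [Eqx qW]] [f_range f_inj f_low f_high].
set g := fun y => _.
have gx : g x = #|S| by rewrite /g eqxx.
have gE y : y != x -> g y = f y by rewrite /g => /negbTE ->.
have cardS : #|S| = #|S :\ x|.+1 by rewrite (cardsD1 x S) xS.
have inSx y : y \in S -> y != x -> y \in S :\ x by rewrite in_setD1 => -> ->.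
have f_lt y : y \in S :\ x -> f y < #|S| by move/f_range => /andP [_]; rewrite cardS.
split.
- move=> v vS; have [->|vx] := eqVneq v x; first by rewrite gx leqnn cardS.
  by rewrite gE // cardS; have /andP [-> /leqW] := f_range v (inSx v vS vx).
- move=> u v uS vS; have [->|ux] := eqVneq u x; have [->|vx] := eqVneq v x => //.
  + by rewrite gx gE // => eq_fv; move: (f_lt v (inSx v vS vx)); rewrite -eq_fv ltnn.
  + by rewrite gx gE // => eq_fu; move: (f_lt u (inSx u uS ux)); rewrite eq_fu ltnn.
  + by rewrite !gE // => /f_inj; apply; apply: inSx.
- move=> v vS; have [->|vx] := eqVneq v x.
    exists q; rewrite Eqx gx; case/orP: qW => [-> // | qSx].
    by move: (qSx); rewrite in_setD1 => /andP [qx ->]; rewrite gE // f_lt ?orbT.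
  have [u /andP [Euv /orP [ur | /andP [uSx fuv]]]] := f_low v (inSx v vS vx).
    by exists u; rewrite Euv ur.
  exists u; move: uSx; rewrite in_setD1 => /andP [ux uS].
  by rewrite Euv uS !gE // fuv orbT.
- move=> v vS; have [->|vx] := eqVneq v x; first by exists b; rewrite Ebx bS.
  have [w /andP [Ewv high]] := f_high v (inSx v vS vx); exists w; rewrite Ewv.
  have [->|wx] := eqVneq w x; first by rewrite gx gE ?f_lt ?orbT // inSx.
  by move: high; rewrite in_setD1 wx gE // !gE.
Qed.

Section Shadows.
Variable S : {set T}.
Hypotheses (rS : r \notin S) (reachS : {in S, forall v, reach_within S v})
  (bypS : bypassable S).

Lemma reach_within_shadow x z : x \in S -> z \in shadow S x -> reach_within (S :\ z) x.
Proof.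
move=> xS; rewrite inE => /and3P [zS zx nz].
have rx : r != x by apply: contraNneq rS => ->.
have [q [qx rq /and3P [Eqx _ _]]] := connect_induced_last rx (reachS xS).
rewrite setU1D1 // in rq; have rq' := connect_induced_avoid nz rq.
apply: connect_trans (connect_induced_sub (setU1D1_subset _ _ _ _) rq') (connect1 _).
apply/and3P; split=> //; last by rewrite !inE (eq_sym x z) zx xS orbT.
by case/orP: (connect_induced_mem rq') => [/eqP -> | /(subsetP (setU1D1_subset _ _ _ _))];
  rewrite ?setU11.
Qed.

Lemma shadow_shadow x z : x \in S -> z \in shadow S x ->
  shadow S z \subset shadow S x :\ z.
Proof.
move=> xS zsh; have := zsh; rewrite inE => /and3P [zS zx nz].
apply/subsetP => u; rewrite inE => /and3P [uS uz nu].
have ux : u != x by apply: contraNneq nu => ->; apply: reach_within_shadow.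
rewrite !inE uz uS ux /=; apply: contra nu => ru.
exact: connect_induced_sub (setU1D1_subset _ _ _ _) (connect_induced_avoid nz ru).
Qed.

Lemma shadow_entry x v : entry S x -> v \in shadow S x ->
  exists2 z, entry S z & z \in shadow S x.
Proof.
case/andP=> xS _ vsh; have := vsh; rewrite inE => /and3P [vS vx nv].
have [rv|[b bS bv]] := bypS xS vS vx; first by rewrite rv in nv.
have bsh : b \notin shadow S x by rewrite inE (negbTE bS).
have [p [z [/and3P [Epz px _] psh zsh]]] := connect_cross bv bsh vsh.
exists z => //; have := zsh; rewrite inE => /and3P [zS zx nz].
rewrite /entry zS; apply/existsP; exists p; rewrite Epz andbT.
rewrite in_setC1 in px; apply: contra nz => pS.
move: psh; rewrite inE pS px /= negbK => rp.
apply: connect_trans rp (connect1 _).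
by apply/and3P; split; rewrite // !inE ?pS ?zS ?px ?zx ?orbT.
Qed.

Lemma entry_shadow0 : S != set0 -> exists2 x, entry S x & shadow S x = set0.
Proof.
case/set0Pn => v vS.
have [x xentry] : exists x, entry S x.
  have [p [z [/and3P [Epz _ _] pS zS]]] := connect_cross (reachS vS) rS vS.
  by exists z; rewrite /entry zS; apply/existsP; exists p; rewrite pS.
elim: {v vS}#|shadow S x|.+1 {-2}x (ltnSn #|shadow S x|) xentry => // n IH y shy yent.
have [sh0|[v vsh]] := set_0Vmem (shadow S y); first by exists y.
have [z zentry zsh] := shadow_entry yent vsh.
apply: IH zentry; move: shy; rewrite (cardsD1 z) zsh ltnS add1n.
exact: leq_ltn_trans (subset_leq_card (shadow_shadow (proj1 (andP yent)) zsh)).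
Qed.

End Shadows.

Lemma bipolar_rank_exists S : r \notin S -> {in S, forall v, reach_within S v} ->
  bypassable S -> exists f, bipolar_rank S f.
Proof.
move: {2}#|S| (erefl #|S|) => n; elim: n S => [|n IH] S cardS rS reachS bypS.
  by exists (fun=> 0); rewrite (cards0_eq cardS); split=> ?; rewrite inE.
have S0 : S != set0 by apply: contra_eqN cardS => /eqP ->; rewrite cards0.
have [x /andP [xS /existsP [b /andP [bS Ebx]]] sh0] := entry_shadow0 rS reachS bypS S0.
have rx : r != x by apply: contraNneq rS => ->.
have [q [qx _ /and3P [Eqx qW _]]] := connect_induced_last rx (reachS x xS).
have cardSx : #|S :\ x| = n by move: cardS; rewrite (cardsD1 x) xS => -[].
have rSx : r \notin S :\ x by rewrite in_setD1 negb_and rS orbT.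
have [f frank] :=
  IH _ cardSx rSx (reach_within_D1 sh0) (bypassable_D1 (x := x) rS bypS).
exists (fun y => if y == x then #|S| else f y); apply: bipolar_rank_extend frank => //.
  by exists b.
by exists q; move: qW; rewrite Eqx !inE qx.
Qed.

Lemma bipolar_rank_two_connected : two_connected E r -> exists f, bipolar_rank [set~ r] f.
Proof.
move=> conn2.
have reach (Z : {set T}) z : #|Z| <= 1 -> r \notin Z -> z \notin Z ->
    connect (induced E (~: Z)) r z.
  move=> Z1 rZ zZ; apply/negPn/negP => nz; apply: (conn2 Z Z1); split=> //.
  exists z; split=> //; apply: contra nz; apply: connect_sub => x y Exy.
  by apply: connect1; move: Exy; rewrite /del_rel /induced /= !inE.
apply: bipolar_rank_exists; first by rewrite !inE eqxx.
  move=> v _; have := reach set0 v; rewrite cards0 setC0 !inE => /(_ isT isT isT).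
  by apply: connect_induced_sub; apply/subsetP => y; rewrite !inE orbN.
move=> s v; rewrite !inE => sr vr vs; right; exists r; rewrite ?inE ?eqxx //.
by apply: reach; rewrite ?cards1 // !inE // eq_sym.
Qed.

Lemma half_arcs_of_bipolar_rank f : loopless E -> bipolar_rank [set~ r] f ->
  exists A : rel T,
    [/\ subrel_of A E, acyclic A, (forall v, connect A r v)
      & #|arcs_avoiding E r| <= 2 * #|arcs_avoiding A r|].
Proof.
move=> loopE [f_range f_inj f_low f_high].
have nonroot v : v != r -> v \in [set~ r] by rewrite in_setC1.
have f_bound v : v != r -> 0 < f v < #|T|.
  move=> vr; have /andP [-> ] := f_range v (nonroot v vr); rewrite cardsC1.
  by have := max_card (pred1 r); rewrite card1; case: #|T|.
move: #|T| f_bound => N f_bound.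
apply: (@acyclic_spanning_of_ranks _ _ _
  (fun v => if v == r then 0 else f v) (fun v => if v == r then 0 else N - f v)).
- move=> v vr; have [u /andP [Euv low]] := f_low v (nonroot v vr).
  exists u; rewrite Euv (negbTE vr) /=; have /andP [fv0 _] := f_bound v vr.
  by case: eqP low => // _; rewrite in_setC1 => /andP [].
- move=> v vr; have [w /andP [Ewv high]] := f_high v (nonroot v vr).
  exists w; rewrite Ewv (negbTE vr) /=; have /andP [_ fvT] := f_bound v vr.
  move: high; rewrite in_setC1 negbK.
  case: eqP => [_ _ | /eqP wr /= fvw]; first by rewrite subn_gt0.
  by have /andP [_ fwT] := f_bound w wr; lia.
move=> u v Euv ur vr; rewrite (negbTE ur) (negbTE vr).
have uv : u != v by apply: contraNneq (loopE u) => uv; rewrite {2}uv.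
have fuv : f u != f v.
  by apply: contraNneq uv => /(f_inj _ _ (nonroot u ur) (nonroot v vr)) ->.
by have /andP [_ fuT] := f_bound u ur; have /andP [_ fvT] := f_bound v vr; lia.
Qed.

End Ordering.

Theorem corollary1 (T : finType) (E : rel T) (r : T) :
  rooted_digraph E r -> two_connected E r ->
  exists A : rel T,
    [/\ subrel_of A E,
        acyclic A,
        (forall v : T, connect A r v)
      & #|arcs_avoiding E r| <= 2 * #|arcs_avoiding A r|].
Proof.
case=> loopE _ _ _ conn2.
have [f frank] := bipolar_rank_two_connected conn2.
exact: half_arcs_of_bipolar_rank loopE frank.
Qed.
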